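(* Let $\mathcal U$ and $\mathcal V$ be non-commutative domains in $M(\mathbb C)^g$. If $f:\mathcal U\to\mathcal V$ is a free map and each $f[n]:\mathcal U(n)\to\mathcal V(n)$ is bianalytic (a holomorphic bijection with holomorphic inverse), then $f$ is a bianalytic free map, i.e. $f$ and $f^{-1}=(f[n]^{-1})_n:\mathcal V\to\mathcal U$ are both proper analytic free maps.
   Context: $M_n(\mathbb C)^g$ denotes $g$-tuples $X=(X_1,\dots,X_g)$ of $n\times n$ complex matrices; $X\Gamma$, $\Gamma Y$, $U^*XU$, $X\oplus Y$ are defined entrywise (the last block diagonally). A non-commutative set $\mathcal U\subseteq M(\mathbb C)^g$ is a sequence $(\mathcal U(n))_n$, $\mathcal U(n)\subseteq M_n(\mathbb C)^g$, closed under simultaneous unitary similarity $X\mapsto U^*XU$ and under direct sums $X\in\mathcal U(n),Y\in\mathcal U(m)\Rightarrow X\oplus Y\in\mathcal U(n+m)$; it is a non-commutative domain if each $\mathcal U(n)$ is open and connected. A free map $f:\mathcal U\to\mathcal V$ is a sequence of functions $f[n]:\mathcal U(n)\to\mathcal V(n)$ such that whenever $X\in\mathcal U(n)$, $Y\in\mathcal U(m)$, $\Gamma\in\mathbb C^{n\times m}$ with $X\Gamma=\Gamma Y$, then $f[n](X)\Gamma=\Gamma f[m](Y)$. An analytic free map is a free map with each $f[n]$ holomorphic; it is proper if each $f[n]:\mathcal U(n)\to\mathcal V(n)$ is proper (preimages of compact sets are compact). *)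

From HB Require Import structures.
From mathcomp Require Import all_boot all_order all_algebra.
From mathcomp Require Import classical_sets reals.
From mathcomp.real_closed Require Import complex.
From Stdlib Require List.
Set Implicit Arguments. Unset Strict Implicit. Unset Printing Implicit Defensive.
Import Order.TTheory GRing.Theory Num.Theory.
Local Open Scope ring_scope.
Local Open Scope classical_set_scope.

Section NC.
Variables (R : realType) (g : nat).

Definition tup (n : nat) := 'I_g -> 'M[R[i]]_n.

Definition tadd n (X Y : tup n) : tup n := fun k => X k + Y k.
Definition topp n (X : tup n) : tup n := fun k => - X k.
Definition tscale n (a : R[i]) (X : tup n) : tup n := fun k => a *: X k.

(* a norm on M_n(C)^g = C^(g n^2) (the l^1 norm of the entries; all norms on
   this finite-dimensional space are equivalent, so it induces the Euclidean
   topology) *)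
Definition tnorm n (X : tup n) : R[i] :=
  \sum_(k < g) \sum_(i < n) \sum_(j < n) `|X k i j|.

Definition topen n (S : set (tup n)) : Prop :=
  forall X, S X -> exists2 e : R[i], 0 < e &
    forall Y, tnorm (tadd Y (topp X)) < e -> S Y.

Definition tconnected n (S : set (tup n)) : Prop :=
  forall A B : set (tup n), topen A -> topen B ->
    S `<=` A `|` B -> S `&` A `&` B = set0 ->
    S `&` A = set0 \/ S `&` B = set0.

Definition tcompact n (K : set (tup n)) : Prop :=
  forall (I : Type) (O : I -> set (tup n)), (forall i, topen (O i)) ->
    K `<=` \bigcup_i O i ->
    exists s : seq I, K `<=` \bigcup_(i in [set i | List.In i s]) O i.

Definition tholo n m (S : set (tup n)) (F : tup n -> tup m) : Prop :=
  forall X, S X -> exists L : tup n -> tup m,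
    (forall (a : R[i]) (H K : tup n),
        L (tadd (tscale a H) K) = tadd (tscale a (L H)) (L K)) /\
    (forall e : R[i], 0 < e -> exists2 d : R[i], 0 < d &
       forall H : tup n, tnorm H < d ->
         tnorm (tadd (F (tadd X H)) (topp (tadd (F X) (L H)))) <= e * tnorm H).

Definition tproper n m (S : set (tup n)) (T : set (tup m)) (F : tup n -> tup m)
  : Prop :=
  forall K, K `<=` T -> tcompact K -> tcompact (S `&` (F @^-1` K)).

Definition tmulr n m (X : tup n) (G : 'M[R[i]]_(n, m)) : 'I_g -> 'M[R[i]]_(n, m) :=
  fun k => X k *m G.
Definition tmull n m (G : 'M[R[i]]_(n, m)) (Y : tup m) : 'I_g -> 'M[R[i]]_(n, m) :=
  fun k => G *m Y k.
Definition adjmx n m (A : 'M[R[i]]_(n, m)) : 'M[R[i]]_(m, n) :=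
  (map_mx Num.conj A)^T.
Definition unitary n (U : 'M[R[i]]_n) : Prop := U *m adjmx U = 1%:M.
Definition tconj n (U : 'M[R[i]]_n) (X : tup n) : tup n :=
  fun k => adjmx U *m X k *m U.
Definition tdsum n m (X : tup n) (Y : tup m) : tup (n + m) :=
  fun k => block_mx (X k) 0 0 (Y k).

Definition ncset (U : forall n, set (tup n)) : Prop :=
  (forall n (X : tup n) (V : 'M[R[i]]_n), U n X -> unitary V -> U n (tconj V X))
  /\ (forall n m (X : tup n) (Y : tup m), U n X -> U m Y -> U (n + m) (tdsum X Y)).

Definition ncdomain (U : forall n, set (tup n)) : Prop :=
  ncset U /\ forall n, topen (U n) /\ tconnected (U n).

Definition free_map (U V : forall n, set (tup n)) (f : forall n, tup n -> tup n)
  : Prop :=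
  (forall n X, U n X -> V n (f n X)) /\
  (forall n m (X : tup n) (Y : tup m) (G : 'M[R[i]]_(n, m)),
     U n X -> U m Y -> tmulr X G = tmull G Y ->
     tmulr (f n X) G = tmull G (f m Y)).

Definition analytic_free_map U V f : Prop :=
  free_map U V f /\ forall n, tholo (U n) (f n).

Definition proper_analytic_free_map U V f : Prop :=
  analytic_free_map U V f /\ forall n, tproper (U n) (V n) (f n).

Definition bianalytic_with_inverse n (U V : set (tup n)) (F H : tup n -> tup n)
  : Prop :=
  [/\ (forall X, U X -> V (F X)), (forall Y, V Y -> U (H Y)),
      (forall X, U X -> H (F X) = X), (forall Y, V Y -> F (H Y) = Y) &
      (tholo U F /\ tholo V H)].

End NC.

(* Properness is soft: the preimage under f[n] of a compact K inside V(n) is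
   the image h[n](K), which is compact because holomorphic maps are continuous.

   The content is that h is again a free map.  Given Y Gamma = Gamma Y' in V,
   put X = h Y, X' = h Y', Z = X (+) X' and N = [[0, Gamma], [0, 0]].  Then
   f Z = Y (+) Y' commutes with N.  Since N^2 = 0 and N Z N = 0, for small t
   the point W = Z + t [Z, N] lies in U and satisfies Z S = S W with
   S = 1 + t N invertible; hence f W = S^-1 (f Z) S = f Z, so W = Z by
   injectivity, i.e. [Z, N] = 0, which says exactly X Gamma = Gamma X'. *)
From HB Require Import structures.
From mathcomp Require Import all_boot all_order all_algebra.
From mathcomp Require Import classical_sets reals boolp.
From mathcomp.real_closed Require Import complex.
Set Implicit Arguments. Unset Strict Implicit. Unset Printing Implicit Defensive.
Import Order.TTheory GRing.Theory Num.Theory.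
Local Open Scope ring_scope.
Local Open Scope classical_set_scope.

Section TupleNorm.
Variables (R : realType) (g : nat).
Local Notation C := R[i].

Definition tzero n : tup R g n := fun _ => 0.

Lemma tnorm_ge0 n (X : tup R g n) : 0 <= tnorm X.
Proof. by apply: sumr_ge0 => k _; apply: sumr_ge0 => i _; apply: sumr_ge0. Qed.

Lemma tnorm0 n : tnorm (tzero n) = 0.
Proof.
rewrite /tnorm big1 // => k _; rewrite big1 // => i _; rewrite big1 // => j _.
by rewrite mxE normr0.
Qed.

Lemma tnormD n (X Y : tup R g n) : tnorm (tadd X Y) <= tnorm X + tnorm Y.
Proof.
rewrite /tnorm -big_split /=; apply: ler_sum => k _.
rewrite -big_split /=; apply: ler_sum => i _.
rewrite -big_split /=; apply: ler_sum => j _.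
by rewrite mxE ler_normD.
Qed.

Lemma tnormZ n a (X : tup R g n) : tnorm (tscale a X) = `|a| * tnorm X.
Proof.
rewrite /tnorm mulr_sumr; apply: eq_bigr => k _.
rewrite mulr_sumr; apply: eq_bigr => i _.
rewrite mulr_sumr; apply: eq_bigr => j _.
by rewrite mxE normrM.
Qed.

Lemma tnorm_sum n (I : Type) (r : seq I) (F : I -> tup R g n) :
  tnorm (\big[@tadd R g n/tzero n]_(x <- r) F x) <= \sum_(x <- r) tnorm (F x).
Proof.
elim: r => [|x r IH]; first by rewrite !big_nil tnorm0.
by rewrite !big_cons; apply: le_trans (tnormD _ _) _; apply: lerD.
Qed.

Lemma sumr_ge_term (I : finType) (F : I -> C) i :
  (forall j, 0 <= F j) -> F i <= \sum_j F j.
Proof. by move=> F_ge0; rewrite (bigD1 i) //= lerDl sumr_ge0. Qed.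

Lemma exists_pos_le2 (a b : C) :
  0 < a -> 0 < b -> exists2 c : C, 0 < c & (c <= a) && (c <= b).
Proof.
move=> a_gt0 b_gt0.
have [ab | ba] := real_leP (gtr0_real a_gt0) (gtr0_real b_gt0).
  by exists a => //; rewrite lexx ab.
by exists b => //; rewrite lexx andbT ltW.
Qed.

End TupleNorm.
Arguments tzero {R g} n.

Section LinearBound.
Variables (R : realType) (g n m : nat) (L : tup R g n -> tup R g m).
Local Notation C := R[i].
Hypothesis L_linear : forall (a : C) (H K : tup R g n),
  L (tadd (tscale a H) K) = tadd (tscale a (L H)) (L K).

Lemma tlin0 : L (tzero n) = tzero m.
Proof.
have := L_linear 1 (tzero n) (tzero n).
have -> : tadd (tscale 1 (tzero n)) (tzero n) = tzero n :> tup R g n.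
  by apply: funext => k; rewrite /tadd /tscale scaler0 addr0.
move=> L0 ; apply: funext => k; have := congr1 (fun Z => Z k - L (tzero n) k) L0.
by rewrite /tadd /tscale scale1r subrr addrK.
Qed.

Lemma tlinD H K : L (tadd H K) = tadd (L H) (L K).
Proof.
have scale1 p (Z : tup R g p) : tscale 1 Z = Z.
  by apply: funext => k; rewrite /tscale scale1r.
by have := L_linear 1 H K; rewrite !scale1.
Qed.

Lemma tlinZ a H : L (tscale a H) = tscale a (L H).
Proof.
have add0 p (Z : tup R g p) : tadd Z (tzero p) = Z.
  by apply: funext => k; rewrite /tadd addr0.
by have := L_linear a H (tzero n); rewrite tlin0 !add0.
Qed.

Definition tdelta (k : 'I_g) (i j : 'I_n) : tup R g n :=
  fun k' => if k' == k then delta_mx i j else 0.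

Lemma tup_delta_sum (H : tup R g n) : H =
  \big[@tadd R g n/tzero n]_(k < g) \big[@tadd R g n/tzero n]_(i < n)
   \big[@tadd R g n/tzero n]_(j < n) tscale (H k i j) (tdelta k i j).
Proof.
apply: funext => k'.
have eval (I : Type) (r : seq I) (F : I -> tup R g n) :
    (\big[@tadd R g n/tzero n]_(x <- r) F x) k' = \sum_(x <- r) F x k'.
  exact: (big_morph (fun X : tup R g n => X k') (id1 := 0) (op1 := +%R)).
rewrite eval (bigD1 k') //= big1 ?addr0.
  rewrite eval [LHS]matrix_sum_delta; apply: eq_bigr => i _.
  by rewrite eval; apply: eq_bigr => j _; rewrite /tscale /tdelta eqxx.
move=> k k'k; rewrite eval big1 // => i _; rewrite eval big1 // => j _.
by rewrite /tscale /tdelta eq_sym (negbTE k'k) scaler0.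
Qed.

Lemma tlin_bounded : exists2 M : C, 0 <= M & forall H, tnorm (L H) <= M * tnorm H.
Proof.
pose T k i j := tnorm (L (tdelta k i j)).
have T_ge0 k i j : 0 <= T k i j by apply: tnorm_ge0.
have Ti_ge0 k i : 0 <= \sum_j T k i j by apply: sumr_ge0.
have Tk_ge0 k : 0 <= \sum_i \sum_j T k i j by apply: sumr_ge0.
pose M := \sum_k \sum_i \sum_j T k i j.
exists M => [|H]; first exact: sumr_ge0.
have L_sum (I : Type) (r : seq I) (F : I -> tup R g n) :
    L (\big[@tadd R g n/tzero n]_(x <- r) F x) =
    \big[@tadd R g m/tzero m]_(x <- r) L (F x).
  exact: (big_morph L tlinD tlin0).
rewrite {1}(tup_delta_sum H) L_sum; apply: le_trans (tnorm_sum _ _) _.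
rewrite /tnorm mulr_sumr; apply: ler_sum => k _.
rewrite L_sum; apply: le_trans (tnorm_sum _ _) _.
rewrite mulr_sumr; apply: ler_sum => i _.
rewrite L_sum; apply: le_trans (tnorm_sum _ _) _.
rewrite mulr_sumr; apply: ler_sum => j _.
rewrite tlinZ tnormZ mulrC ler_wpM2r ?normr_ge0 //.
apply: le_trans (sumr_ge_term j (T_ge0 k i)) _.
apply: le_trans (sumr_ge_term i (Ti_ge0 k)) _.
exact: sumr_ge_term k Tk_ge0.
Qed.

End LinearBound.

Section Continuity.
Variables (R : realType) (g : nat).
Local Notation C := R[i].

Definition tcontinuous n m (S : set (tup R g n)) (F : tup R g n -> tup R g m) :=
  forall X, S X -> forall e : C, 0 < e -> exists2 d : C, 0 < d &
    forall Y, tnorm (tadd Y (topp X)) < d -> tnorm (tadd (F Y) (topp (F X))) < e.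

Lemma tholo_continuous n m (S : set (tup R g n)) (F : tup R g n -> tup R g m) :
  tholo S F -> tcontinuous S F.
Proof.
move=> F_holo X SX e e_gt0.
have [L [L_linear F_diff]] := F_holo X SX.
have [M M_ge0 L_le] := tlin_bounded L_linear.
have [d1 d1_gt0 rem_le] := F_diff 1 ltr01.
have M1_gt0 : 0 < 1 + M by apply: ltr_wpDr M_ge0 ltr01.
have [d d_gt0 /andP[dd1 de]] := exists_pos_le2 d1_gt0 (divr_gt0 e_gt0 M1_gt0).
exists d => // Y XY_lt; set H := tadd Y (topp X).
have YE : Y = tadd X H by apply: funext => k; rewrite /H /tadd /topp addrC subrK.
have -> : tadd (F Y) (topp (F X)) =
          tadd (tadd (F (tadd X H)) (topp (tadd (F X) (L H)))) (L H).
  by rewrite -YE; apply: funext => k; rewrite /tadd /topp opprD !addrA subrK.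
apply: le_lt_trans (tnormD _ _) _.
have rem_H : tnorm (tadd (F (tadd X H)) (topp (tadd (F X) (L H)))) <= 1 * tnorm H.
  by apply: rem_le; apply: lt_le_trans XY_lt dd1.
apply: le_lt_trans (lerD rem_H (L_le H)) _.
have : tnorm H < e / (1 + M) by apply: lt_le_trans XY_lt de.
by rewrite -mulrDl ltr_pdivlMr // mulrC.
Qed.

Lemma tcompact_image n m (S : set (tup R g n)) (F : tup R g n -> tup R g m) K :
  topen S -> tcontinuous S F -> K `<=` S -> tcompact K -> tcompact (F @` K).
Proof.
move=> S_open F_cont KS K_compact I O O_open cover.
case: (K_compact I (fun i => S `&` F @^-1` O i)) => [i X [SX OFX]|X KX|s cover_s].
- have [e1 e1_gt0 ballS] := S_open X SX.
  have [e2 e2_gt0 ballO] := O_open i (F X) OFX.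
  have [d d_gt0 F_near] := F_cont X SX e2 e2_gt0.
  have [c c_gt0 /andP[ce1 cd]] := exists_pos_le2 e1_gt0 d_gt0.
  exists c => // Y XY_lt; split; first by apply: ballS; apply: lt_le_trans XY_lt ce1.
  by apply: ballO; apply: F_near; apply: lt_le_trans XY_lt cd.
- have [i _ OFX] := cover (F X) (ex_intro2 _ _ X KX erefl).
  by exists i => //; split => //; apply: KS.
- by exists s => _ [X KX <-]; have [i si [_ OFX]] := cover_s X KX; exists i.
Qed.

End Continuity.

Section Bianalytic.
Variables (R : realType) (g n : nat) (S T : set (tup R g n)).
Variables (F H : tup R g n -> tup R g n).

Lemma bianalytic_with_inverse_sym :
  bianalytic_with_inverse S T F H -> bianalytic_with_inverse T S H F.
Proof. by case=> FST HTS HF FH [F_holo H_holo]; split. Qed.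

Lemma bianalytic_proper :
  topen T -> bianalytic_with_inverse S T F H -> tproper S T F.
Proof.
move=> T_open [FST HTS HF FH [_ H_holo]] K KT K_compact.
have -> : S `&` F @^-1` K = H @` K.
  apply: funext => X; apply: propext; split.
    by case=> SX KFX; exists (F X) => //; rewrite HF.
  by case=> Y KY <-; have TY := KT Y KY; split; [apply: HTS | rewrite /preimage /= FH].
exact: tcompact_image T_open (tholo_continuous H_holo) KT K_compact.
Qed.

End Bianalytic.

Section Rigidity.
Variables (R : realType) (g p : nat) (S : set (tup R g p)).
Variable F : tup R g p -> tup R g p.
Local Notation C := R[i].
Hypothesis S_open : topen S.
Hypothesis F_inj : forall X Y, S X -> S Y -> F X = F Y -> X = Y.
Hypothesis F_similar : forall X Y (Q : 'M[C]_p),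
  S X -> S Y -> tmulr X Q = tmull Q Y -> tmulr (F X) Q = tmull Q (F Y).

Lemma reflect_commute_nilpotent (Z : tup R g p) (N : 'M[C]_p) :
  S Z -> N *m N = 0 -> (forall k, N *m Z k *m N = 0) ->
  (forall k, F Z k *m N = N *m F Z k) -> forall k, Z k *m N = N *m Z k.
Proof.
move=> SZ NN NZN FZN.
pose D : tup R g p := fun k => Z k *m N - N *m Z k.
have [e e_gt0 ballZ] := S_open SZ.
have D1_gt0 : 0 < tnorm D + 1 by apply: ltr_wpDl (tnorm_ge0 D) ltr01.
pose t : C := e / (tnorm D + 1).
have t_gt0 : 0 < t by apply: divr_gt0.
pose W : tup R g p := tadd Z (tscale t D).
have SW : S W.
  apply: ballZ; have -> : tadd W (topp Z) = tscale t D.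
    by apply: funext => k; rewrite /W /tadd /topp addrAC subrr add0r.
  rewrite tnormZ gtr0_norm // /t mulrAC -mulrA -[X in _ < X]mulr1.
  by rewrite ltr_pM2l // ltr_pdivrMr // mul1r ltrDl ltr01.
pose Q : 'M[C]_p := 1%:M + t *: N.
have ZQ_QW : tmulr Z Q = tmull Q W.
  apply: funext => k; rewrite /tmulr /tmull /W /tadd /tscale /D /Q.
  rewrite mulmxDr mulmx1 mulmxDl mul1mx !mulmxDr -!scalemxAl -!scalemxAr.
  rewrite mulmxBr !mulmxA NZN NN mul0mx subrr !scaler0 addr0.
  by rewrite scalerBr -addrA subrK.
have Q_inv : (1%:M - t *: N) *m Q = 1%:M.
  rewrite /Q mulmxBl mul1mx mulmxDr mulmx1 -scalemxAl -scalemxAr NN.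
  by rewrite !scaler0 addr0 addrK.
have FW_FZ : F W = F Z.
  apply: funext => k.
  have := congr1 (fun Y => Y k) (F_similar SZ SW ZQ_QW); rewrite /tmulr /tmull /=.
  have -> : F Z k *m Q = Q *m F Z k.
    by rewrite /Q mulmxDr mulmx1 mulmxDl mul1mx -scalemxAl -scalemxAr FZN.
  by move=> /(congr1 (mulmx (1%:M - t *: N))); rewrite !mulmxA Q_inv !mul1mx.
move=> k; have := congr1 (fun Y => Y k) (F_inj SW SZ FW_FZ).
rewrite /W /tadd /tscale => /eqP; rewrite addrC -subr_eq0 addrK scalemx_eq0.
by rewrite (gt_eqF t_gt0) /= /D subr_eq0 => /eqP.
Qed.

End Rigidity.

Section DirectSum.
Variables (R : realType) (g : nat).
Local Notation C := R[i].

Lemma free_map_dsum (U V : forall n, set (tup R g n)) f n m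
    (X : tup R g n) (X' : tup R g m) :
  free_map U V f -> U n X -> U m X' -> U (n + m)%N (tdsum X X') ->
  f (n + m)%N (tdsum X X') = tdsum (f n X) (f m X').
Proof.
move=> [_ f_free] UX UX' UZ; apply: funext => k; set Z := tdsum X X'.
have incl1 : tmulr Z (col_mx 1%:M 0) = tmull (col_mx 1%:M 0) X.
  apply: funext => l; rewrite /tmulr /tmull /Z /tdsum mul_block_col mul_col_mx.
  by rewrite !mulmx1 !mulmx0 !mul1mx !mul0mx addr0 add0r.
have incl2 : tmulr Z (col_mx 0 1%:M) = tmull (col_mx 0 1%:M) X'.
  apply: funext => l; rewrite /tmulr /tmull /Z /tdsum mul_block_col mul_col_mx.
  by rewrite !mulmx1 !mulmx0 !mul1mx !mul0mx addr0 add0r.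
have := congr1 (fun Y => Y k) (f_free _ _ _ _ _ UZ UX incl1).
have := congr1 (fun Y => Y k) (f_free _ _ _ _ _ UZ UX' incl2).
rewrite /tmulr /tmull /= -[f _ Z k]hsubmxK !mul_row_col.
rewrite !mulmx1 !mulmx0 addr0 add0r !mul_col_mx !mul1mx !mul0mx => -> ->.
by rewrite /tdsum block_mxEh.
Qed.

Lemma dsum_commute_nilpotent n m (A A' : 'M[C]_n) (B B' : 'M[C]_m)
    (G : 'M[C]_(n, m)) :
  let N := block_mx 0 G 0 0 in
  (block_mx A 0 0 B *m N = N *m block_mx A' 0 0 B') <-> (A *m G = G *m B').
Proof.
rewrite /= !mulmx_block !mulmx0 !mul0mx !addr0 !add0r.
by split => [/eq_block_mx[] | ->].
Qed.

Lemma free_map_inverse (U V : forall n, set (tup R g n))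
    (f h : forall n, tup R g n -> tup R g n) :
  (forall n, topen (U n)) ->
  (forall n m (X : tup R g n) (Y : tup R g m),
     U n X -> U m Y -> U (n + m)%N (tdsum X Y)) ->
  free_map U V f -> (forall n, bianalytic_with_inverse (U n) (V n) (f n) (h n)) ->
  free_map V U h.
Proof.
move=> U_open U_dsum f_free f_bi; split=> [n Y VY|n m Y Y' G VY VY' YG].
  by case: (f_bi n) => _ + _ _ _; apply.
have [_ hVU _ fh _] := f_bi n; have [_ hVU' _ fh' _] := f_bi m.
set X := h n Y; set X' := h m Y'; set Z := tdsum X X'.
have [UX UX'] : U n X /\ U m X' by split; [apply: hVU | apply: hVU'].
have UZ : U (n + m)%N Z by apply: U_dsum.
pose N : 'M[C]_(n + m) := block_mx 0 G 0 0.
have fZ : f _ Z = tdsum Y Y' by rewrite (free_map_dsum f_free) // /X /X' fh ?fh'.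
have NN : N *m N = 0 by rewrite mulmx_block !mulmx0 !mul0mx !addr0 block_mx0.
have NZN k : N *m Z k *m N = 0.
  by rewrite /N /Z /tdsum !mulmx_block !mulmx0 !mul0mx !addr0 !mul0mx block_mx0.
have fZN k : f _ Z k *m N = N *m f _ Z k.
  by rewrite fZ; apply/dsum_commute_nilpotent; have := congr1 (fun W => W k) YG.
have f_inj (A B : tup R g (n + m)) : U _ A -> U _ B -> f _ A = f _ B -> A = B.
  by case: (f_bi (n + m)%N) => _ _ hf _ _ UA UB fAB; rewrite -(hf A) // fAB hf.
have ZN := reflect_commute_nilpotent (U_open _) f_inj
  (fun A B Q => f_free.2 _ _ A B Q) UZ NN NZN fZN.
by apply: funext => k; rewrite /tmulr /tmull; apply/dsum_commute_nilpotent; apply: ZN.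
Qed.

End DirectSum.

Theorem corollary3p2 (R : realType) (g : nat)
  (U V : forall n, set (tup R g n)) (f h : forall n, tup R g n -> tup R g n) :
  ncdomain U -> ncdomain V ->
  free_map U V f ->
  (forall n, bianalytic_with_inverse (U n) (V n) (f n) (h n)) ->
  proper_analytic_free_map U V f /\ proper_analytic_free_map V U h.
Proof.
move=> [[_ U_dsum] U_top] [_ V_top] f_free f_bi.
have U_open n : topen (U n) by case: (U_top n).
have V_open n : topen (V n) by case: (V_top n).
have h_bi n := bianalytic_with_inverse_sym (f_bi n).
have h_free := free_map_inverse U_open U_dsum f_free f_bi.
split; split.
- by split=> // n; case: (f_bi n) => _ _ _ _ [].
- by move=> n; apply: bianalytic_proper (V_open n) (f_bi n).
- by split=> // n; case: (h_bi n) => _ _ _ _ [].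
- by move=> n; apply: bianalytic_proper (U_open n) (h_bi n).
Qed.
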